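(* Let $\mathbf{C}$ be a category all of whose morphisms are monomorphisms, enriched over $\mathbf{Top}$ with all homsets Hausdorff, and let $\mathbf{D}$ be a full subcategory of $\mathbf{C}$ which is a skeletal category of finite objects. Let $S \in \mathrm{Ob}(\mathbf{C})$ be universal for $\mathbf{D}$, and for each $B \in \mathrm{Ob}(\mathbf{D})$ fix a morphism $\iota_B \in \hom(B,S)$. Assume that $T_\mathbf{C}(A,S) < \infty$ for all $A \in \mathrm{Ob}(\mathbf{D})$ and that $S$ is approximable in $\mathbf{D}$ via $F : \mathrm{Ob}(\mathbf{D}) \to \mathrm{Ob}(\mathbf{D})$ and $(\Phi_A)_{A\in\mathrm{Ob}(\mathbf{D})}$. Then for every $A \in \mathrm{Ob}(\mathbf{D})$ there is an $n \in \mathbb{N}$ such that for every $k \in \mathbb{N}$ and every coloring $\chi : \bigcup_{B\in\mathrm{Ob}(\mathbf{D})} \hom(A,B) \to k$ there is $h \in \hom(S,S)$ satisfying $$\Big|\chi\Big(\bigcup_{B \in \mathrm{Ob}(\mathbf{D})} h \star \hom(A,B)\Big)\Big| \le n,$$ where for $h \in \hom(S,S)$ and $f \in \hom(A,B)$ with $A,B\in\mathrm{Ob}(\mathbf{D})$ we set $h \star f = \Phi_B(h\cdot\iota_{F(B)})\cdot f$.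
   Context: A category is enriched over $\mathbf{Top}$ if each homset is a topological space and composition is continuous. Skeletal: no two distinct objects are isomorphic. A category of finite objects is a locally small directed category whose morphisms are monomorphisms, whose skeleton has at most countably many objects, and in whose skeleton every object is the codomain of only finitely many morphisms. $S$ is universal for $\mathbf{D}$ if $\hom_\mathbf{C}(D,S)\neq\varnothing$ for every $D\in\mathrm{Ob}(\mathbf{D})$. $S$ is approximable in $\mathbf{D}$ via $F$ and $(\Phi_A)$ if each $\Phi_A:\hom_\mathbf{C}(F(A),S)\to\bigcup_{C\in\mathrm{Ob}(\mathbf{D})}\hom_\mathbf{D}(A,C)$ is Borel (preimages of open subsets of each $\hom_\mathbf{D}(A,C)$ are Borel) and for all $A,B\in\mathrm{Ob}(\mathbf{D})$, $f\in\hom_\mathbf{D}(A,B)$, $u\in\hom_\mathbf{C}(F(B),S)$ there is $f'\in\hom_\mathbf{D}(F(A),F(B))$ with $\Phi_A(u\cdot f')=\Phi_B(u)\cdot f$. $T_\mathbf{C}(X,S)$ (big embedding Ramsey degree) is the least positive integer $n$ such that for every $k\ge2$ and every Borel coloring $\chi:\hom_\mathbf{C}(X,S)\to\{0,\dots,k-1\}$ (all fibers Borel) there is $w\in\hom(S,S)$ with $|\chi(w\cdot\hom(X,S))|\le n$; $\infty$ if none. $h\star\hom(A,B)=\{h\star f: f\in\hom(A,B)\}$. *)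

From HB Require Import structures.
From mathcomp Require Import all_boot all_order all_algebra.
From mathcomp Require Import all_classical all_reals all_analysis.
From Stdlib Require List.
Set Implicit Arguments.
Unset Strict Implicit.
Unset Printing Implicit Defensive.
Local Open Scope classical_set_scope.

Definition Borel (X : topologicalType) (A : set X) : Prop :=
  <<s [set: X], @open X >> A.

Record TopCat := {
  Obj :> Type;
  Mor : Obj -> Obj -> topologicalType;
  comp : forall A B C : Obj, Mor B C -> Mor A B -> Mor A C;
  idm : forall A : Obj, Mor A A;
  compA : forall (A B C D : Obj) (h : Mor C D) (g : Mor B C) (f : Mor A B),
      comp h (comp g f) = comp (comp h g) f;
  comp1m : forall (A B : Obj) (f : Mor A B), comp (idm B) f = f;
  compm1 : forall (A B : Obj) (f : Mor A B), comp f (idm A) = f;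
  comp_cont : forall A B C : Obj,
      continuous (fun p : Mor B C * Mor A B => comp p.1 p.2)
}.

Arguments comp {t A B C}.
Arguments idm {t}.

Definition all_mono (C : TopCat) : Prop :=
  forall (A B X : C) (g : Mor B X) (f1 f2 : Mor A B), comp g f1 = comp g f2 -> f1 = f2.

Definition hausdorff_homs (C : TopCat) : Prop :=
  forall A B : C, hausdorff_space (Mor A B).

(* A full subcategory D of C is given by its class of objects (predicate inD);
   its homsets are those of C (with the same topology). *)
Definition DObj (C : TopCat) (inD : C -> Prop) := {A : C | inD A}.

Definition isomorphic (C : TopCat) (A B : C) : Prop :=
  exists (f : Mor A B) (g : Mor B A), comp g f = idm A /\ comp f g = idm B.

Definition skeletal (C : TopCat) (inD : C -> Prop) : Prop :=
  forall A B : DObj inD, isomorphic (sval A) (sval B) -> sval A = sval B.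

Definition directed (C : TopCat) (inD : C -> Prop) : Prop :=
  forall A B : DObj inD, exists X : DObj inD,
    inhabited (Mor (sval A) (sval X)) /\ inhabited (Mor (sval B) (sval X)).

(* D is a category of finite objects (D is assumed skeletal, so D is its own
   skeleton; local smallness is automatic here; monomorphisms are inherited from C). *)
Definition finite_objects_cat (C : TopCat) (inD : C -> Prop) : Prop :=
  [/\ directed inD,
      (forall (A B X : DObj inD) (g : Mor (sval B) (sval X)) (f1 f2 : Mor (sval A) (sval B)),
          comp g f1 = comp g f2 -> f1 = f2),
      (exists e : DObj inD -> nat, injective e) &
      (forall B : DObj inD, exists s : list {A : DObj inD & Mor (sval A) (sval B)},
          forall p, List.In p s)].

Definition universal (C : TopCat) (inD : C -> Prop) (S : C) : Prop :=
  forall D : DObj inD, inhabited (Mor (sval D) S).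

Definition homsD (C : TopCat) (inD : C -> Prop) (A : DObj inD) :=
  {X : DObj inD & Mor (sval A) (sval X)}.

Definition post (C : TopCat) (inD : C -> Prop) (A B : DObj inD)
  (p : homsD B) (f : Mor (sval A) (sval B)) : homsD A :=
  existT _ (projT1 p) (comp (projT2 p) f).

Definition approximable (C : TopCat) (inD : C -> Prop) (S : C)
  (F : DObj inD -> DObj inD)
  (Phi : forall A : DObj inD, Mor (sval (F A)) S -> homsD A) : Prop :=
  (forall (A X : DObj inD) (U : set (Mor (sval A) (sval X))), open U ->
     Borel [set u | exists g, U g /\ Phi A u = existT _ X g])
  /\
  (forall (A B : DObj inD) (f : Mor (sval A) (sval B)) (u : Mor (sval (F B)) S),
     exists f' : Mor (sval (F A)) (sval (F B)),
       Phi A (comp u f') = post (Phi B u) f).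

Definition Borel_coloring (C : TopCat) (X S : C) (k : nat) (chi : Mor X S -> 'I_k) : Prop :=
  forall i : 'I_k, Borel [set f | chi f = i].

Definition big_degree_bound (C : TopCat) (X S : C) (n : nat) : Prop :=
  forall k : nat, (2 <= k)%N -> forall chi : Mor X S -> 'I_k, Borel_coloring chi ->
    exists w : Mor S S,
      (#|[set i : 'I_k | `[< exists f : Mor X S, chi (comp w f) = i >]]| <= n)%N.

Definition big_degree_finite (C : TopCat) (X S : C) : Prop :=
  exists n : nat, (0 < n)%N /\ big_degree_bound X S n.

Definition star (C : TopCat) (inD : C -> Prop) (S : C)
  (F : DObj inD -> DObj inD)
  (Phi : forall A : DObj inD, Mor (sval (F A)) S -> homsD A)
  (iota : forall B : DObj inD, Mor (sval B) S)
  (h : Mor S S) (A B : DObj inD) (f : Mor (sval A) (sval B)) : homsD A :=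
  post (Phi B (comp h (iota (F B)))) f.

From Pilot Require Import Defs.
From HB Require Import structures.
From mathcomp Require Import all_boot all_order all_algebra.
From mathcomp Require Import all_classical all_reals all_analysis.
From Stdlib Require Import Eqdep.
Local Open Scope classical_set_scope.

(* Every homset of D is finite and Hausdorff, hence discrete, and D has only
   countably many objects; so the Borel measurability of Phi_A makes
   chi \o Phi_A a Borel colouring of hom(F(A), S) for any colouring chi of
   U_B hom(A, B).  A bound n for the big Ramsey degree of F(A) in S yields w
   such that chi \o Phi_A takes at most n colours on w . hom(F(A), S), and by
   approximability every w * f is of the form Phi_A (w . u). *)

Lemma sigma_algebra_bigcup_inj {T} {D : set T} {G : set (set T)} {I}
    {e : I -> nat} {F : I -> set T} :
  injective e -> (forall i, <<s D, G >> (F i)) -> <<s D, G >> (\bigcup_i F i).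
Proof.
move=> e_inj mF.
have -> : \bigcup_i F i = \bigcup_m \bigcup_(i in e @^-1` [set m]) F i.
  apply/seteqP; split=> [x [i _ Fix]|x [m _ [i _ Fix]]]; last by exists i.
  by exists (e i) => //; exists i.
apply: sigma_algebra_bigcup => m.
have [[i /= eim]|no_i] := pselect (exists i, e i = m).
  have -> : e @^-1` [set m] = [set i].
    by apply/seteqP; split=> [j /= ejm|j /= ->//]; apply: e_inj; rewrite ejm.
  by rewrite bigcup_set1.
have -> : e @^-1` [set m] = set0.
  by apply/seteqP; split=> // j /= ejm; apply: no_i; exists j.
by rewrite bigcup_set0; exact: sigma_algebra0.
Qed.

Lemma finite_set_In {T} (s : list T) : finite_set [set x | List.In x s].
Proof.
elim: s => [|y s IHs]; first by rewrite (_ : [set x | _] = set0) ?finite_set0.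
rewrite (_ : [set x | _] = [set y] `|` [set x | List.In x s]).
  by rewrite finite_setU; split.
by apply/seteqP; split=> x /= [->|]; by [left | right].
Qed.

Lemma accessible_finite_open (T : topologicalType) :
  accessible_space T -> finite_set [set: T] -> forall U : set T, open U.
Proof.
move=> T1 finT U; rewrite -(setCK U) openC.
apply: accessible_finite_set_closed.1 T1 _ _.
exact: sub_finite_set finT.
Qed.

Section FiniteObjects.
Context {C : TopCat} {inD : C -> Prop}.
Hypothesis finD : finite_objects_cat inD.

Lemma finite_objects_hom_finite (A X : DObj inD) :
  finite_set [set: Mor (sval A) (sval X)].
Proof.
case: finD => _ _ _ /(_ X) [s s_all].
have -> : [set: Mor (sval A) (sval X)] =
    (fun g => existT _ A g) @^-1` [set p | List.In p s].
  by apply/seteqP; split=> g // _; exact: s_all.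
apply: finite_preimage (finite_set_In s).
by move=> g1 g2 _ _; exact: inj_pair2.
Qed.

Lemma finite_objects_hom_open {A X : DObj inD} :
  hausdorff_space (Mor (sval A) (sval X)) ->
  forall U : set (Mor (sval A) (sval X)), open U.
Proof.
move=> /hausdorff_accessible T1.
exact: accessible_finite_open T1 (finite_objects_hom_finite A X).
Qed.

End FiniteObjects.

Section Approximation.
Context {C : TopCat} {inD : C -> Prop} {S : C} {F : DObj inD -> DObj inD}.
Context {Phi : forall A : DObj inD, Mor (sval (F A)) S -> homsD A}.
Hypothesis approxS : approximable Phi.

Lemma approximable_Borel_preimage {A : DObj inD} :
  hausdorff_homs C -> finite_objects_cat inD ->
  forall Z : set (homsD A), Borel (Phi A @^-1` Z).
Proof.
move=> haus finD Z; case: approxS => PhiB _; have [_ _ [e e_inj] _] := finD.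
have -> : Phi A @^-1` Z = \bigcup_X
    [set u | exists g, [set g | Z (existT _ X g)] g /\ Phi A u = existT _ X g].
  apply/seteqP; split=> u /=; last by move=> [X _ [g [Zg ->]]].
  by case E: (Phi A u) => [X g] Zu; exists X => //; exists g.
apply: sigma_algebra_bigcup_inj e_inj _ => X; apply: PhiB.
exact: (finite_objects_hom_open finD (haus _ _)).
Qed.

Lemma star_Phi_comp (iota : forall B : DObj inD, Mor (sval B) S)
    (h : Mor S S) {A B : DObj inD} (f : Mor (sval A) (sval B)) :
  exists u : Mor (sval (F A)) S, star Phi iota h f = Phi A (Defs.comp h u).
Proof.
case: approxS => _ /(_ A B f (Defs.comp h (iota (F B)))) [f' Phi_f'].
by exists (Defs.comp (iota (F B)) f'); rewrite Defs.compA Phi_f'.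
Qed.

End Approximation.

Theorem theorem6p3 (C : TopCat) (inD : C -> Prop) (S : C)
  (iota : forall B : DObj inD, Mor (sval B) S)
  (F : DObj inD -> DObj inD)
  (Phi : forall A : DObj inD, Mor (sval (F A)) S -> homsD A) :
  all_mono C ->
  hausdorff_homs C ->
  skeletal inD ->
  finite_objects_cat inD ->
  universal inD S ->
  (forall A : DObj inD, big_degree_finite (sval A) S) ->
  @approximable C inD S F Phi ->
  forall A : DObj inD, exists n : nat, forall (k : nat) (chi : homsD A -> 'I_k),
    exists h : Mor S S,
      (#|[set i : 'I_k | `[< exists (B : DObj inD) (f : Mor (sval A) (sval B)),
                              chi (@star C inD S F Phi iota h A B f) = i >]]| <= n)%N.
Proof.
move=> _ haus _ finD _ deg approxS A.
have [n [n_gt0 degn]] := deg (F A).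
exists n => k chi.
have [k_ge2|k_lt2] := leqP 2 k; last first.
  exists (idm S); apply: leq_trans (max_card _) _; rewrite card_ord.
  by apply: leq_trans n_gt0; rewrite -ltnS.
have chiPhi_Borel : Borel_coloring (chi \o Phi A) := fun i =>
  approximable_Borel_preimage approxS haus finD [set x | chi x = i].
have [w w_colours] := degn k k_ge2 _ chiPhi_Borel.
exists w; apply: leq_trans w_colours; apply: subset_leq_card.
apply/fintype.subsetP => i; rewrite !inE => /asboolP [B [f <-]]; apply/asboolP.
have [u ->] := star_Phi_comp approxS iota w f.
by exists u.
Qed.
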